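(* Let $M$ be a pointed metric space and $\mu\in S_{\mathcal{F}(M)}$. Suppose that for every $\eta>0$, $\mu$ can be written as a norm-convergent series $\mu=\sum_{k=1}^\infty a_k m_{x_ky_k}$ with $a_k\in\mathbb{R}$, $x_k\neq y_k$, $\sum_{k}|a_k|<1+\eta$, and such that each pair $(x_k,y_k)$ is discretely connectable in $M$. Then $\mu$ is a $\Delta$-point of $\mathcal{F}(M)$.
   Context: For a pointed metric space $(M,d)$, ${\mathrm{Lip}}_0(M)$ is the space of Lipschitz $f:M\to\mathbb{R}$ vanishing at the base point, normed by the Lipschitz constant; $\mathcal{F}(M)$ is the closed linear span of the point evaluations $\delta(x)$ in ${\mathrm{Lip}}_0(M)^*$. For $x\ne y$ the molecule is $m_{xy}=(\delta(x)-\delta(y))/d(x,y)\in S_{\mathcal{F}(M)}$. Points $x,y$ are $\varepsilon$-discretely connectable if there are $p_0=x,p_1,\dots,p_{n+1}=y$ in $M$ with $d(p_i,p_{i+1})<\varepsilon$ for all $i$ and $\sum_{i=0}^nd(p_i,p_{i+1})<d(x,y)+\varepsilon$; discretely connectable if this holds for every $\varepsilon>0$. A point $z\in S_X$ of a Banach space is a $\Delta$-point if $\sup_{w\in S}\|z-w\|=2$ for every slice $S=\{w\in B_X:f(w)>1-\alpha\}$ ($f\in S_{X^*}$, $\alpha>0$) of $B_X$ with $z\in S$. *)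

From Stdlib Require Import Reals List Lra.
From Coquelicot Require Import Coquelicot.
Open Scope R_scope.

Section LipFree.
Variable M : Type.
Variable d : M -> M -> R.

Definition is_metric : Prop :=
  (forall x y, 0 <= d x y) /\ (forall x y, d x y = 0 <-> x = y) /\
  (forall x y, d x y = d y x) /\ (forall x y z, d x z <= d x y + d y z).

Definition lip_le (f : M -> R) (L : R) : Prop :=
  forall x y, Rabs (f x - f y) <= L * d x y.

Definition Lip0 (x0 : M) (f : M -> R) : Prop :=
  f x0 = 0 /\ exists L, lip_le f L.

(* Elements of Lip_0(M)^* are represented as functions on M -> R, of which
   only the values on Lip_0(M) matter. *)
Definition functional := (M -> R) -> R.

Definition is_Lip0_dual (x0 : M) (phi : functional) : Prop :=
  (forall f g a b, Lip0 x0 f -> Lip0 x0 g ->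
     phi (fun t => a * f t + b * g t) = a * phi f + b * phi g) /\
  (exists C, forall f L, Lip0 x0 f -> lip_le f L -> Rabs (phi f) <= C * L).

Definition dnorm (x0 : M) (phi : functional) : Rbar :=
  Lub_Rbar (fun t => exists f, Lip0 x0 f /\ lip_le f 1 /\ t = Rabs (phi f)).

Definition fsub (phi psi : functional) : functional := fun f => phi f - psi f.
Definition fscal (a : R) (phi : functional) : functional := fun f => a * phi f.

Definition delta (x : M) : functional := fun f => f x.
Definition molecule (x y : M) : functional := fun f => (f x - f y) / d x y.

Definition delta_comb (l : list (R * M)) : functional :=
  fun f => fold_right (fun p acc => fst p * f (snd p) + acc) 0 l.

(* F(M): closed linear span of the delta(x) in Lip_0(M)^* *)
Definition inFM (x0 : M) (mu : functional) : Prop :=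
  is_Lip0_dual x0 mu /\
  forall eps, 0 < eps -> exists l : list (R * M),
    Rbar_lt (dnorm x0 (fsub mu (delta_comb l))) eps.

Definition S_FM (x0 : M) (mu : functional) : Prop :=
  inFM x0 mu /\ dnorm x0 mu = Finite 1.
Definition B_FM (x0 : M) (mu : functional) : Prop :=
  inFM x0 mu /\ Rbar_le (dnorm x0 mu) 1.

Definition FM_dual_linear (x0 : M) (G : functional -> R) : Prop :=
  forall mu nu a b, inFM x0 mu -> inFM x0 nu ->
    G (fun f => a * mu f + b * nu f) = a * G mu + b * G nu.
Definition FM_dual_norm (x0 : M) (G : functional -> R) : Rbar :=
  Lub_Rbar (fun t => exists w, B_FM x0 w /\ t = Rabs (G w)).
(* unit sphere of F(M)^* (norm 1 implies boundedness, hence continuity) *)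
Definition S_FM_dual (x0 : M) (G : functional -> R) : Prop :=
  FM_dual_linear x0 G /\ FM_dual_norm x0 G = Finite 1.

Definition in_slice (x0 : M) (G : functional -> R) (alpha : R) (w : functional) : Prop :=
  B_FM x0 w /\ G w > 1 - alpha.

Definition Delta_point (x0 : M) (z : functional) : Prop :=
  S_FM x0 z /\
  forall G alpha, S_FM_dual x0 G -> 0 < alpha -> in_slice x0 G alpha z ->
    Lub_Rbar (fun t => exists w, in_slice x0 G alpha w /\
                          Finite t = dnorm x0 (fsub z w)) = Finite 2.

Fixpoint chain_steps_lt (eps : R) (p : list M) : Prop :=
  match p with
  | a :: ((b :: _) as t) => d a b < eps /\ chain_steps_lt eps t
  | _ => True
  end.
Fixpoint chain_length (p : list M) : R :=
  match p with
  | a :: ((b :: _) as t) => d a b + chain_length t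
  | _ => 0
  end.

Definition eps_disc_connectable (eps : R) (x y : M) : Prop :=
  exists l : list M,
    chain_steps_lt eps (x :: l ++ y :: nil) /\
    chain_length (x :: l ++ y :: nil) < d x y + eps.

Definition disc_connectable (x y : M) : Prop :=
  forall eps, 0 < eps -> eps_disc_connectable eps x y.

Definition mol_partial_sum (a : nat -> R) (x y : nat -> M) (n : nat) : functional :=
  fun f => sum_n (fun k => a k * molecule (x k) (y k) f) n.

Definition mol_series_norm_conv (x0 : M) (mu : functional)
    (a : nat -> R) (x y : nat -> M) : Prop :=
  forall eps, 0 < eps -> exists N : nat, forall n, (N <= n)%nat ->
    Rbar_lt (dnorm x0 (fsub mu (mol_partial_sum a x y n))) eps.

End LipFree.

From Stdlib Require Import Reals List Lra Psatz FunctionalExtensionality Classical.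
From Coquelicot Require Import Coquelicot.
Open Scope R_scope.

(* Fix a slice {w in B : G w > kap} containing mu and eps > 0; we find a molecule
   m_uv in the slice with ||mu - m_uv|| > 2 - eps.
   1. A partial sum S = sum_{k<=N} a_k m_k is zeta-close to mu, so G S is close to
      G mu > kap while sum_k |a_k| is close to 1; by averaging, |G m_k| > kap for
      some k ([large_dual_molecule]).
   2. Along a fine chain from x_k to y_k of length close to d(x_k,y_k), the values
      of G on point evaluations must grow faster than kap on some short step, which
      yields a molecule m_uv in the slice with d(u,v) as small as we like
      ([short_molecule_in_slice]).
   3. A 1-Lipschitz h norming mu is modified by at most 3 d(u,v) so that it takes the
      value -1 on m_uv; this moves S only by O(d(u,v)), so the modified function still
      almost norms mu and ||mu - m_uv|| is almost 2 ([far_from_molecule]). *)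

Lemma sum_n_Rabs (u : nat -> R) (n : nat) :
  Rabs (sum_n u n) <= sum_n (fun k => Rabs (u k)) n.
Proof. exact (norm_sum_n_m u 0 n). Qed.

Lemma sum_n_scale (u : nat -> R) (c : R) (n : nat) :
  sum_n (fun k => c * u k) n = c * sum_n u n.
Proof. exact (sum_n_mult_l c u n). Qed.

Lemma sum_n_minus_R (u v : nat -> R) (n : nat) :
  sum_n u n - sum_n v n = sum_n (fun k => u k - v k) n.
Proof.
  induction n as [|n IH]; [rewrite !sum_O; reflexivity|].
  rewrite !sum_Sn, <- IH. unfold plus; simpl; ring.
Qed.

Lemma series_partial_le (a : nat -> R) (s : R) (n : nat) :
  (forall k, 0 <= a k) -> is_series a s -> sum_n a n <= s.
Proof.
  intros Ha Hs.
  assert (Hmono : forall m, (n <= m)%nat -> sum_n a n <= sum_n a m).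
  { intros m Hm. induction Hm as [|m _ IH]; [lra|].
    rewrite sum_Sn. specialize (Ha (S m)). unfold plus; simpl; lra. }
  apply (is_lim_seq_le_loc (fun _ => sum_n a n) (sum_n a) (sum_n a n) s);
    [exists n; exact Hmono | apply is_lim_seq_const | exact Hs].
Qed.

Lemma averaging (a q : nat -> R) (kap : R) (N : nat) :
  kap * sum_n (fun k => Rabs (a k)) N < sum_n (fun k => a k * q k) N ->
  exists k, kap < Rabs (q k).
Proof.
  intros Hsum. apply NNPP; intros Hno.
  assert (Hterm : forall k, a k * q k <= kap * Rabs (a k)).
  { intros k. assert (Hq : Rabs (q k) <= kap) by (apply Rnot_lt_le; eauto).
    pose proof (Rle_abs (a k * q k)) as Hak. rewrite Rabs_mult in Hak.
    pose proof (Rabs_pos (a k)). nra. }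
  assert (Hle : sum_n (fun k => a k * q k) N <= sum_n (fun k => kap * Rabs (a k)) N)
    by (apply sum_n_m_le; exact Hterm).
  rewrite sum_n_scale in Hle. lra.
Qed.

Lemma choose_tolerance (eps gap c : R) :
  0 < eps -> 0 < gap -> 0 <= c ->
  exists zeta, 0 < zeta /\ 4 * zeta <= eps /\ zeta * (1 + 2 * c) < gap.
Proof.
  intros Heps Hgap Hc.
  exists (Rmin (eps / 4) (gap / (4 * (c + 1)))).
  pose proof (Rmin_l (eps / 4) (gap / (4 * (c + 1)))) as Hmin_l.
  pose proof (Rmin_r (eps / 4) (gap / (4 * (c + 1)))) as Hmin_r.
  set (zeta := Rmin (eps / 4) (gap / (4 * (c + 1)))) in *.
  split; [apply Rmin_pos; [lra|apply Rdiv_lt_0_compat; lra]|split; [lra|]].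
  apply Rmult_le_compat_r with (r := 4 * (c + 1)) in Hmin_r; [|lra].
  replace (gap / (4 * (c + 1)) * (4 * (c + 1))) with gap in Hmin_r by (field; lra).
  assert (0 < zeta) by (apply Rmin_pos; [lra|apply Rdiv_lt_0_compat; lra]).
  nra.
Qed.

Lemma Lub_Rbar_approx (T : R -> Prop) (c : R) :
  (forall t, T t -> t <= c) ->
  (forall eps, 0 < eps -> exists t, T t /\ c - eps < t) ->
  Lub_Rbar T = Finite c.
Proof.
  intros Hub Happ. apply is_lub_Rbar_unique. split.
  - intros t Ht. exact (Hub t Ht).
  - intros [b| |] Hb; simpl; auto.
    + apply Rnot_lt_le. intros Hbc.
      destruct (Happ (c - b)) as [t [Ht Hct]]; [lra|].
      specialize (Hb t Ht). simpl in Hb. lra.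
    + destruct (Happ 1) as [t [Ht _]]; [lra|]. exact (Hb t Ht).
Qed.

Section DualNorm.
Variables (M : Type) (d : M -> M -> R) (x0 : M).
Local Notation dn := (dnorm M d x0).

Lemma dnorm_ge (phi : functional M) (f : M -> R) :
  Lip0 M d x0 f -> lip_le M d f 1 -> Rbar_le (Finite (Rabs (phi f))) (dn phi).
Proof.
  intros Hf Hf1. apply (proj1 (Lub_Rbar_correct _)). exists f; auto.
Qed.

Lemma dnorm_le (phi : functional M) (c : R) :
  (forall f, Lip0 M d x0 f -> lip_le M d f 1 -> Rabs (phi f) <= c) ->
  Rbar_le (dn phi) (Finite c).
Proof.
  intros Hc. apply (proj2 (Lub_Rbar_correct _)).
  intros t [f [Hf [Hf1 ->]]]. exact (Hc f Hf Hf1).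
Qed.

Lemma dnorm_bound (phi : functional M) (f : M -> R) (c : R) :
  Lip0 M d x0 f -> lip_le M d f 1 -> Rbar_le (dn phi) (Finite c) -> Rabs (phi f) <= c.
Proof.
  intros Hf Hf1 Hc. exact (Rbar_le_trans _ _ (Finite c) (dnorm_ge phi f Hf Hf1) Hc).
Qed.

Lemma dnorm_bound_lt (phi : functional M) (f : M -> R) (c : R) :
  Lip0 M d x0 f -> lip_le M d f 1 -> Rbar_lt (dn phi) (Finite c) -> Rabs (phi f) < c.
Proof.
  intros Hf Hf1 Hc. exact (Rbar_le_lt_trans _ _ (Finite c) (dnorm_ge phi f Hf Hf1) Hc).
Qed.

Lemma norming_function (mu : functional M) (zeta : R) :
  is_Lip0_dual M d x0 mu -> dn mu = Finite 1 -> 0 < zeta ->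
  exists h, Lip0 M d x0 h /\ lip_le M d h 1 /\ 1 - zeta < mu h.
Proof.
  intros [Hlin _] Hmu Hz.
  assert (Hf : exists f, Lip0 M d x0 f /\ lip_le M d f 1 /\ 1 - zeta < Rabs (mu f)).
  { apply NNPP; intros Hno.
    assert (Hle : Rbar_le (dn mu) (Finite (1 - zeta))).
    { apply dnorm_le. intros f Hf Hf1. apply Rnot_lt_le. intros Hlt. apply Hno. eauto. }
    rewrite Hmu in Hle. simpl in Hle. lra. }
  destruct Hf as [f [Hf [Hf1 Hmuf]]].
  destruct (Rle_dec 0 (mu f)) as [Hpos|Hneg].
  - exists f. rewrite Rabs_right in Hmuf by lra. auto.
  - set (g := fun t => -1 * f t + 0 * f t).
    assert (Hlipg : lip_le M d g 1).
    { intros p q. replace (g p - g q) with (- (f p - f q)) by (unfold g; ring).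
      rewrite Rabs_Ropp. apply Hf1. }
    exists g. split; [|split]; auto.
    + split; [unfold g; rewrite (proj1 Hf); ring | exists 1; exact Hlipg].
    + unfold g. rewrite (Hlin f f (-1) 0 Hf Hf). rewrite Rabs_left in Hmuf; lra.
Qed.

Lemma dnorm_diff_le_2 (mu w : functional M) :
  dn mu = Finite 1 -> Rbar_le (dn w) (Finite 1) -> Rbar_le (dn (fsub M mu w)) (Finite 2).
Proof.
  intros Hmu Hw. apply dnorm_le. intros f Hf Hf1. unfold fsub.
  assert (Hmu1 : Rbar_le (dn mu) (Finite 1)) by (rewrite Hmu; simpl; lra).
  pose proof (dnorm_bound mu f 1 Hf Hf1 Hmu1).
  pose proof (dnorm_bound w f 1 Hf Hf1 Hw).
  pose proof (Rabs_triang (mu f) (- w f)). rewrite Rabs_Ropp in *. unfold Rminus. lra.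
Qed.

End DualNorm.

Section FreeSpace.
Variables (M : Type) (d : M -> M -> R) (x0 : M).
Hypothesis hd : is_metric M d.
Local Notation dn := (dnorm M d x0).
Local Notation inF := (inFM M d x0).

Lemma dist_pos (x y : M) : x <> y -> 0 < d x y.
Proof.
  intros Hxy. destruct hd as [Hnn [Hzero _]].
  destruct (Hnn x y) as [|Hxy0]; auto. exfalso. apply Hxy, Hzero. auto.
Qed.

Definition comb_scale (a : R) (l : list (R * M)) : list (R * M) :=
  map (fun p => (a * fst p, snd p)) l.

Lemma delta_comb_app (l1 l2 : list (R * M)) (f : M -> R) :
  delta_comb M (l1 ++ l2) f = delta_comb M l1 f + delta_comb M l2 f.
Proof.
  unfold delta_comb. induction l1 as [|p l IH]; simpl; [lra|]. rewrite IH. lra.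
Qed.

Lemma delta_comb_scale (a : R) (l : list (R * M)) (f : M -> R) :
  delta_comb M (comb_scale a l) f = a * delta_comb M l f.
Proof.
  unfold delta_comb. induction l as [|p l IH]; simpl; [lra|]. rewrite IH. lra.
Qed.

Lemma inFM_lin (mu nu : functional M) (a b : R) :
  inF mu -> inF nu -> inF (fun f => a * mu f + b * nu f).
Proof.
  intros [[Lmu [Cmu Bmu]] Amu] [[Lnu [Cnu Bnu]] Anu].
  assert (Hab : 0 <= Rabs a /\ 0 <= Rabs b) by (split; apply Rabs_pos).
  split; [split|].
  - intros f g a' b' Hf Hg. rewrite (Lmu f g a' b' Hf Hg), (Lnu f g a' b' Hf Hg). ring.
  - exists (Rabs a * Cmu + Rabs b * Cnu). intros f L Hf HL.
    specialize (Bmu f L Hf HL). specialize (Bnu f L Hf HL).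
    eapply Rle_trans; [apply Rabs_triang|]. rewrite !Rabs_mult. nra.
  - intros eps Heps. set (e := eps / (2 * (Rabs a + Rabs b + 1))).
    assert (He : 0 < e) by (unfold e; apply Rdiv_lt_0_compat; lra).
    destruct (Amu e He) as [l1 H1]. destruct (Anu e He) as [l2 H2].
    exists (comb_scale a l1 ++ comb_scale b l2).
    apply Rbar_le_lt_trans with (Finite ((Rabs a + Rabs b) * e)).
    + apply dnorm_le. intros f Hf Hf1. unfold fsub.
      rewrite delta_comb_app, !delta_comb_scale.
      pose proof (dnorm_bound_lt M d x0 _ f e Hf Hf1 H1) as G1.
      pose proof (dnorm_bound_lt M d x0 _ f e Hf Hf1 H2) as G2. unfold fsub in G1, G2.
      replace (a * mu f + b * nu f - (a * delta_comb M l1 f + b * delta_comb M l2 f))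
        with (a * (mu f - delta_comb M l1 f) + b * (nu f - delta_comb M l2 f)) by ring.
      eapply Rle_trans; [apply Rabs_triang|]. rewrite !Rabs_mult. nra.
    + simpl. assert (Hfe : (Rabs a + Rabs b + 1) * e = eps / 2) by (unfold e; field; lra).
      nra.
Qed.

Lemma inFM_delta (x : M) : inF (delta M x).
Proof.
  split; [split|].
  - intros. unfold delta. ring.
  - exists (d x x0). intros f L [Hf0 _] HL. unfold delta.
    specialize (HL x x0). rewrite Hf0, Rminus_0_r in HL. lra.
  - intros eps Heps. exists ((1, x) :: nil).
    apply Rbar_le_lt_trans with (Finite 0); [|simpl; lra].
    apply dnorm_le. intros f _ _. unfold fsub, delta, delta_comb. simpl.
    replace (f x - (1 * f x + 0)) with 0 by ring. rewrite Rabs_R0. lra.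
Qed.

Lemma molecule_as_deltas (x y : M) : x <> y ->
  molecule M d x y = (fun f => (1 / d x y) * delta M x f + (- 1 / d x y) * delta M y f).
Proof.
  intros Hxy. pose proof (dist_pos x y Hxy). apply functional_extensionality. intros f.
  unfold molecule, delta. field. lra.
Qed.

Lemma molecule_le_1 (x y : M) (f : M -> R) :
  x <> y -> lip_le M d f 1 -> Rabs (molecule M d x y f) <= 1.
Proof.
  intros Hxy Hf. pose proof (dist_pos x y Hxy) as Hd. specialize (Hf x y).
  unfold molecule. rewrite Rabs_div, (Rabs_right (d x y)) by lra.
  apply Rmult_le_reg_r with (d x y); [lra|]. field_simplify; lra.
Qed.

Lemma molecule_in_ball (x y : M) : x <> y -> B_FM M d x0 (molecule M d x y).
Proof.
  intros Hxy. split.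
  - rewrite molecule_as_deltas by exact Hxy. apply inFM_lin; apply inFM_delta.
  - apply dnorm_le. intros f _ Hf. exact (molecule_le_1 x y f Hxy Hf).
Qed.

Lemma fsub_as_comb (mu nu : functional M) :
  fsub M mu nu = (fun f => 1 * mu f + -1 * nu f).
Proof. apply functional_extensionality. intros f. unfold fsub. ring. Qed.

Lemma inFM_fsub (mu nu : functional M) : inF mu -> inF nu -> inF (fsub M mu nu).
Proof. intros Hmu Hnu. rewrite fsub_as_comb. apply inFM_lin; assumption. Qed.

Lemma dual_fsub (G : functional M -> R) (mu nu : functional M) :
  FM_dual_linear M d x0 G -> inF mu -> inF nu -> G (fsub M mu nu) = G mu - G nu.
Proof. intros HG Hmu Hnu. rewrite fsub_as_comb, HG by assumption. ring. Qed.

(* A functional of norm one on F(M) satisfies |G w| <= ||w||, shown by rescaling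
   w into the unit ball. *)
Lemma dual_bound (G : functional M -> R) (w : functional M) (c : R) :
  S_FM_dual M d x0 G -> inF w -> 0 < c -> Rbar_le (dn w) (Finite c) -> Rabs (G w) <= c.
Proof.
  intros [HGlin HGnorm] Hw Hc Hwc.
  set (w' := fun f => (1 / c) * w f + 0 * w f).
  assert (Hw' : B_FM M d x0 w').
  { split; [apply inFM_lin; assumption|].
    apply dnorm_le. intros f Hf Hf1. unfold w'.
    pose proof (dnorm_bound M d x0 w f c Hf Hf1 Hwc).
    rewrite Rmult_0_l, Rplus_0_r, Rabs_mult, Rabs_right
      by (apply Rle_ge, Rlt_le, Rdiv_lt_0_compat; lra).
    apply Rmult_le_reg_l with c; [exact Hc|]. field_simplify; lra. }
  assert (HGw' : Rbar_le (Finite (Rabs (G w'))) (Finite 1)).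
  { rewrite <- HGnorm. apply (proj1 (Lub_Rbar_correct _)). exists w'; auto. }
  simpl in HGw'. unfold w' in HGw'. rewrite (HGlin w w (1 / c) 0 Hw Hw) in HGw'.
  rewrite Rmult_0_l, Rplus_0_r, Rabs_mult, Rabs_right in HGw'
    by (apply Rle_ge, Rlt_le, Rdiv_lt_0_compat; lra).
  apply Rmult_le_reg_l with (1 / c); [apply Rdiv_lt_0_compat; lra|].
  replace (1 / c * c) with 1 by (field; lra). exact HGw'.
Qed.

Lemma dual_molecule (G : functional M -> R) (x y : M) :
  FM_dual_linear M d x0 G -> x <> y ->
  G (molecule M d x y) = (G (delta M x) - G (delta M y)) / d x y.
Proof.
  intros HG Hxy. pose proof (dist_pos x y Hxy).
  rewrite molecule_as_deltas, HG by (assumption || apply inFM_delta). field. lra.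
Qed.

Section PartialSums.
Variables (a : nat -> R) (x y : nat -> M).
Hypothesis Hxy : forall k, x k <> y k.
Local Notation psum := (mol_partial_sum M d a x y).

Lemma partial_sum_inFM_dual (G : functional M -> R) (N : nat) :
  FM_dual_linear M d x0 G ->
  inF (psum N) /\ G (psum N) = sum_n (fun k => a k * G (molecule M d (x k) (y k))) N.
Proof.
  intros HG.
  assert (Hm : forall k, inF (molecule M d (x k) (y k)))
    by (intros k; apply molecule_in_ball; auto).
  induction N as [|N [IHin IHG]].
  - replace (psum 0) with (fun f => a 0%nat * molecule M d (x 0%nat) (y 0%nat) f
                                   + 0 * molecule M d (x 0%nat) (y 0%nat) f).
    + rewrite sum_O, HG by auto. split; [apply inFM_lin; auto|ring].
    + unfold mol_partial_sum. apply functional_extensionality. intros f.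
      rewrite sum_O. ring.
  - replace (psum (S N))
      with (fun f => 1 * psum N f + a (S N) * molecule M d (x (S N)) (y (S N)) f).
    + rewrite sum_Sn, HG, IHG by auto. split; [apply inFM_lin; auto|].
      unfold plus; simpl. ring.
    + unfold mol_partial_sum. apply functional_extensionality. intros f.
      rewrite sum_Sn. unfold plus; simpl. ring.
Qed.

Lemma partial_sum_le_l1 (N : nat) (f : M -> R) :
  lip_le M d f 1 -> Rabs (psum N f) <= sum_n (fun k => Rabs (a k)) N.
Proof.
  intros Hf. eapply Rle_trans; [apply sum_n_Rabs|]. apply sum_n_m_le. intros k.
  rewrite Rabs_mult. pose proof (molecule_le_1 (x k) (y k) f (Hxy k) Hf).
  pose proof (Rabs_pos (a k)). nra.
Qed.

Lemma partial_sum_perturb (N : nat) (f1 f2 : M -> R) (c : R) :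
  (forall t, Rabs (f1 t - f2 t) <= c) ->
  Rabs (psum N f1 - psum N f2) <= 2 * c * sum_n (fun k => Rabs (a k) / d (x k) (y k)) N.
Proof.
  intros Hc. unfold mol_partial_sum. rewrite sum_n_minus_R.
  rewrite <- sum_n_scale.
  eapply Rle_trans; [apply sum_n_Rabs|]. apply sum_n_m_le. intros k.
  pose proof (dist_pos (x k) (y k) (Hxy k)) as Hd.
  set (D := d (x k) (y k)) in *.
  assert (Hdiff : Rabs ((f1 (x k) - f2 (x k)) - (f1 (y k) - f2 (y k))) <= 2 * c).
  { pose proof (Hc (x k)). pose proof (Hc (y k)).
    pose proof (Rabs_triang (f1 (x k) - f2 (x k)) (- (f1 (y k) - f2 (y k)))).
    rewrite Rabs_Ropp in *. unfold Rminus at 1. lra. }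
  replace (a k * molecule M d (x k) (y k) f1 - a k * molecule M d (x k) (y k) f2)
    with (a k * ((f1 (x k) - f2 (x k)) - (f1 (y k) - f2 (y k))) / D).
  2:{ unfold molecule. fold D. field. apply Rgt_not_eq. exact Hd. }
  rewrite Rabs_div, Rabs_mult, (Rabs_right D) by lra.
  unfold Rdiv. replace (2 * c * (Rabs (a k) * / D)) with (Rabs (a k) * (2 * c) * / D) by ring.
  apply Rmult_le_compat_r; [apply Rlt_le, Rinv_0_lt_compat, Hd|].
  apply Rmult_le_compat_l; [apply Rabs_pos|exact Hdiff].
Qed.

End PartialSums.

Lemma chain_length_ge (l : list M) :
  forall x y, d x y <= chain_length M d (x :: l ++ y :: nil).
Proof.
  destruct hd as [_ [_ [_ Htri]]].
  induction l as [|b l IH]; intros x y.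
  - simpl. lra.
  - change (d x y <= d x b + chain_length M d (b :: l ++ y :: nil)).
    specialize (IH b y). specialize (Htri x b y). lra.
Qed.

Lemma chain_steep_step (psi : M -> R) (k ep : R) (l : list M) :
  forall x y, chain_steps_lt M d ep (x :: l ++ y :: nil) ->
  k * chain_length M d (x :: l ++ y :: nil) < psi x - psi y ->
  exists u v, d u v < ep /\ k * d u v < psi u - psi v.
Proof.
  induction l as [|b l IH]; intros x y Hsteps Hslope.
  - exists x, y. simpl in Hsteps, Hslope. split; [tauto|lra].
  - change (k * (d x b + chain_length M d (b :: l ++ y :: nil)) < psi x - psi y) in Hslope.
    change (d x b < ep /\ chain_steps_lt M d ep (b :: l ++ y :: nil)) in Hsteps.
    destruct Hsteps as [Hxb Hsteps].
    destruct (Rlt_dec (k * d x b) (psi x - psi b)) as [Hsteep|Hflat].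
    + exists x, b. auto.
    + apply (IH b y Hsteps). lra.
Qed.

(* For discretely connectable x, y with psi x - psi y > k d(x,y), there is an
   arbitrarily short step u, v with psi u - psi v > k d(u,v): use a chain whose
   length exceeds d(x,y) by less than the slack. *)
Lemma connectable_steep_step (psi : M -> R) (k ep : R) (x y : M) :
  disc_connectable M d x y -> k * d x y < psi x - psi y -> 0 < ep ->
  exists u v, d u v < ep /\ k * d u v < psi u - psi v.
Proof.
  intros Hconn Hslope Hep.
  set (gap := psi x - psi y - k * d x y).
  assert (Hk : 0 < Rabs k + 1) by (pose proof (Rabs_pos k); lra).
  set (ep' := Rmin ep (gap / (Rabs k + 1))).
  assert (Hep' : 0 < ep') by (apply Rmin_pos; [lra|apply Rdiv_lt_0_compat; unfold gap; lra]).
  assert (Hep'gap : ep' * (Rabs k + 1) <= gap).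
  { pose proof (Rmin_r ep (gap / (Rabs k + 1))) as Hmin. fold ep' in Hmin.
    apply Rmult_le_compat_r with (r := Rabs k + 1) in Hmin; [|lra].
    replace (gap / (Rabs k + 1) * (Rabs k + 1)) with gap in Hmin by (field; lra). exact Hmin. }
  destruct (Hconn ep' Hep') as [l [Hsteps Hlen]].
  pose proof (chain_length_ge l x y) as Hge.
  set (len := chain_length M d (x :: l ++ y :: nil)) in *.
  assert (Hshort : k * len < psi x - psi y).
  { assert (k * (len - d x y) <= Rabs k * (len - d x y))
      by (apply Rmult_le_compat_r; [lra|apply Rle_abs]).
    assert (Rabs k * (len - d x y) <= Rabs k * ep')
      by (apply Rmult_le_compat_l; [apply Rabs_pos|lra]).
    unfold gap in Hep'gap. nra. }
  destruct (chain_steep_step psi k ep' l x y Hsteps Hshort) as [u [v [Huv Hsteep]]].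
  exists u, v. split; [|exact Hsteep].
  pose proof (Rmin_l ep (gap / (Rabs k + 1))) as Hmin. fold ep' in Hmin. lra.
Qed.

Lemma steep_pair_molecule (G : functional M -> R) (kap : R) (u v : M) :
  FM_dual_linear M d x0 G -> kap * d u v < G (delta M u) - G (delta M v) ->
  u <> v /\ kap < G (molecule M d u v).
Proof.
  intros HG Hsteep.
  assert (Huv : u <> v).
  { intros <-. rewrite (proj2 (proj1 (proj2 hd) u u) eq_refl) in Hsteep. lra. }
  split; [exact Huv|].
  pose proof (dist_pos u v Huv) as Hd. rewrite dual_molecule by assumption.
  apply Rmult_lt_reg_r with (d u v); [exact Hd|]. field_simplify; lra.
Qed.

(* Step 2: a molecule m_xy with |G m_xy| > kap and x, y discretely connectable
   produces molecules in the slice {G > kap} of arbitrarily small diameter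
   (orient the pair according to the sign of G m_xy). *)
Lemma short_molecule_in_slice (G : functional M -> R) (kap ep : R) (x y : M) :
  FM_dual_linear M d x0 G -> x <> y -> disc_connectable M d x y ->
  kap < Rabs (G (molecule M d x y)) -> 0 < ep ->
  exists u v, u <> v /\ d u v < ep /\ kap < G (molecule M d u v).
Proof.
  intros HG Hxy Hconn Hkap Hep.
  pose proof (dist_pos x y Hxy) as Hd.
  rewrite dual_molecule, Rabs_div, (Rabs_right (d x y)) in Hkap by (assumption || lra).
  assert (Hslope : kap * d x y < Rabs (G (delta M x) - G (delta M y))).
  { apply Rmult_lt_reg_r with (/ d x y); [apply Rinv_0_lt_compat, Hd|].
    rewrite Rmult_assoc, Rinv_r by lra. lra. }
  destruct (Rle_dec 0 (G (delta M x) - G (delta M y))) as [Hpos|Hneg].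
  - rewrite Rabs_right in Hslope by lra.
    destruct (connectable_steep_step (fun p => G (delta M p)) kap ep x y Hconn Hslope Hep)
      as [u [v [Huv Hsteep]]].
    destruct (steep_pair_molecule G kap u v HG Hsteep) as [Hne Hin].
    exists u, v. auto.
  - rewrite Rabs_left in Hslope by lra.
    destruct (connectable_steep_step (fun p => - G (delta M p)) kap ep x y Hconn)
      as [u [v [Huv Hsteep]]]; [lra|exact Hep|].
    destruct hd as [_ [_ [Hsym _]]]. rewrite (Hsym u v) in Huv, Hsteep.
    destruct (steep_pair_molecule G kap v u HG) as [Hne Hin]; [lra|].
    exists v, u. auto.
Qed.

(* Clamping h between h - 3 del/2 and h + 3 del/2 around the cone
   h u - del/2 + d(., u), with del = d(u,v), keeps it 1-Lipschitz and makes it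
   rise by exactly del from u to v. *)
Lemma peak_perturbation (h : M -> R) (u v : M) :
  lip_le M d h 1 ->
  exists g, lip_le M d g 1 /\ (forall t, Rabs (g t - h t) <= 3 / 2 * d u v) /\
            g u = h u - d u v / 2 /\ g v = h u + d u v / 2.
Proof.
  intros Hh. destruct hd as [Hnn [Hzero [Hsym Htri]]].
  set (del := d u v). set (s := 3 / 2 * del).
  assert (Hdel : 0 <= del) by apply Hnn.
  exists (fun t => Rmax (h t - s) (Rmin (h t + s) (h u - del / 2 + d t u))).
  split; [|split; [|split]].
  - intros p q. pose proof (Hh p q) as Hpq. apply Rabs_le_between' in Hpq.
    pose proof (Htri p q u). pose proof (Htri q p u). rewrite (Hsym q p) in *.
    apply Rabs_le. unfold Rmax, Rmin; repeat destruct Rle_dec; lra.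
  - intros t. apply Rabs_le. unfold s, Rmax, Rmin; repeat destruct Rle_dec; lra.
  - rewrite (proj2 (Hzero u u) eq_refl). unfold s, Rmax, Rmin; repeat destruct Rle_dec; lra.
  - rewrite (Hsym v u). fold del.
    pose proof (Hh u v) as Huv. fold del in Huv. apply Rabs_le_between' in Huv.
    unfold s, Rmax, Rmin; repeat destruct Rle_dec; lra.
Qed.

Lemma test_function_for_molecule (h : M -> R) (u v : M) :
  u <> v -> Lip0 M d x0 h -> lip_le M d h 1 ->
  exists g, Lip0 M d x0 g /\ lip_le M d g 1 /\
            (forall t, Rabs (g t - h t) <= 3 * d u v) /\ molecule M d u v g = -1.
Proof.
  intros Huv [Hh0 _] Hh.
  pose proof (dist_pos u v Huv) as Hd.
  destruct (peak_perturbation h u v Hh) as [g [Hg [Hgh [Hgu Hgv]]]].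
  assert (Hg0 : lip_le M d (fun t => g t - g x0) 1).
  { intros p q. replace (g p - g x0 - (g q - g x0)) with (g p - g q) by ring. apply Hg. }
  exists (fun t => g t - g x0). split; [|split; [exact Hg0|split]].
  - split; [ring|exists 1; exact Hg0].
  - intros t. pose proof (Hgh t). pose proof (Hgh x0). rewrite Hh0, Rminus_0_r in *.
    pose proof (Rabs_triang (g t - h t) (- g x0)). rewrite Rabs_Ropp in *.
    replace (g t - g x0 - h t) with (g t - h t + - g x0) by ring. lra.
  - unfold molecule. rewrite Hgu, Hgv. field. lra.
Qed.

Lemma far_from_molecule (mu : functional M) (a : nat -> R) (x y : nat -> M) (N : nat)
    (h : M -> R) (u v : M) (zeta : R) :
  (forall k, x k <> y k) -> u <> v ->
  Rbar_lt (dn (fsub M mu (mol_partial_sum M d a x y N))) zeta ->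
  Lip0 M d x0 h -> lip_le M d h 1 -> 1 - zeta < mu h ->
  6 * d u v * sum_n (fun k => Rabs (a k) / d (x k) (y k)) N < zeta ->
  Rbar_lt (Finite (2 - 4 * zeta)) (dn (fsub M mu (molecule M d u v))).
Proof.
  intros Hxy Huv Happrox Hh0 Hh Hmuh Hsmall.
  destruct (test_function_for_molecule h u v Huv Hh0 Hh) as [g [Hg0 [Hg [Hgh Hmol]]]].
  set (S := mol_partial_sum M d a x y N) in *.
  pose proof (dnorm_bound_lt M d x0 _ g zeta Hg0 Hg Happrox) as Hmug.
  pose proof (dnorm_bound_lt M d x0 _ h zeta Hh0 Hh Happrox) as Hmuh'.
  pose proof (partial_sum_perturb a x y Hxy N g h (3 * d u v) Hgh) as Hpert. fold S in Hpert.
  unfold fsub in Hmug, Hmuh'.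
  apply Rabs_def2 in Hmug. apply Rabs_def2 in Hmuh'. apply Rabs_le_between' in Hpert.
  apply Rbar_lt_le_trans with (Finite (Rabs (fsub M mu (molecule M d u v) g))).
  - simpl. unfold fsub. rewrite Hmol. pose proof (Rle_abs (mu g - -1)). lra.
  - apply dnorm_ge; assumption.
Qed.

Definition connectable_molecular_reps (mu : functional M) : Prop :=
  forall eta, 0 < eta ->
    exists (a : nat -> R) (x y : nat -> M),
      (forall k, x k <> y k) /\
      mol_series_norm_conv M d x0 mu a x y /\
      (exists s, is_series (fun k => Rabs (a k)) s /\ s < 1 + eta) /\
      (forall k, disc_connectable M d (x k) (y k)).

(* Step 1: a good partial sum of a representation contains a molecule m_k with
   |G m_k| > kap, by averaging G S ~ G mu over the weights |a_k|, sum |a_k| ~ 1. *)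
Lemma large_dual_molecule (mu : functional M) (G : functional M -> R) (kap zeta : R)
    (a : nat -> R) (x y : nat -> M) (N : nat) (s : R) (h : M -> R) :
  S_FM_dual M d x0 G -> inF mu -> (forall k, x k <> y k) ->
  is_series (fun k => Rabs (a k)) s -> s < 1 + zeta ->
  Rbar_lt (dn (fsub M mu (mol_partial_sum M d a x y N))) zeta ->
  Lip0 M d x0 h -> lip_le M d h 1 -> 1 - zeta < mu h ->
  0 < zeta -> zeta * (1 + 2 * Rabs kap) < G mu - kap ->
  exists k, kap < Rabs (G (molecule M d (x k) (y k))).
Proof.
  intros HG Hmu Hxy Hs Hs1 Happrox Hh0 Hh Hmuh Hz Hgap.
  set (S := mol_partial_sum M d a x y N) in *.
  set (Sig := sum_n (fun k => Rabs (a k)) N).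
  destruct (partial_sum_inFM_dual a x y Hxy G N (proj1 HG)) as [HS HGS]. fold S in HS, HGS.
  assert (HGclose : Rabs (G mu - G S) <= zeta).
  { rewrite <- dual_fsub by (exact (proj1 HG) || assumption).
    apply dual_bound; [exact HG|apply inFM_fsub; assumption|exact Hz|].
    apply Rbar_lt_le. exact Happrox. }
  assert (HSig_up : Sig <= s) by (apply series_partial_le; [intros; apply Rabs_pos|exact Hs]).
  assert (HSig_low : 1 - 2 * zeta < Sig).
  { pose proof (partial_sum_le_l1 a x y Hxy N h Hh) as HSh. fold S Sig in HSh.
    pose proof (dnorm_bound_lt M d x0 _ h zeta Hh0 Hh Happrox) as Hclose. unfold fsub in Hclose.
    pose proof (Rle_abs (S h)). apply Rabs_def2 in Hclose. lra. }
  apply (averaging a (fun k => G (molecule M d (x k) (y k))) kap N).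
  rewrite <- HGS. fold Sig. apply Rabs_le_between' in HGclose.
  assert (kap * Sig <= kap + 2 * Rabs kap * zeta).
  { destruct (Rle_dec 0 kap).
    - rewrite Rabs_right by lra. nra.
    - rewrite Rabs_left by lra. nra. }
  lra.
Qed.

Lemma slice_contains_far_molecule (mu : functional M) (G : functional M -> R) (alpha eps : R) :
  S_FM M d x0 mu -> connectable_molecular_reps mu -> S_FM_dual M d x0 G ->
  G mu > 1 - alpha -> 0 < eps ->
  exists w, in_slice M d x0 G alpha w /\ Rbar_lt (Finite (2 - eps)) (dn (fsub M mu w)).
Proof.
  intros [Hmu Hmu1] Hrep HG Hslice Heps.
  set (kap := 1 - alpha) in *.
  destruct (choose_tolerance eps (G mu - kap) (Rabs kap) Heps) as [zeta [Hz [Hz_eps Hz_gap]]];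
    [lra|apply Rabs_pos|].
  destruct (norming_function M d x0 mu zeta (proj1 Hmu) Hmu1 Hz) as [h [Hh0 [Hh Hmuh]]].
  destruct (Hrep zeta Hz) as (a & x & y & Hxy & Hconv & (s & Hs & Hs1) & Hconn).
  destruct (Hconv zeta Hz) as [N HN]. specialize (HN N (le_n N)).
  destruct (large_dual_molecule mu G kap zeta a x y N s h HG Hmu Hxy Hs Hs1 HN Hh0 Hh Hmuh Hz Hz_gap)
    as [k Hk].
  set (K := sum_n (fun j => Rabs (a j) / d (x j) (y j)) N).
  assert (HK : 0 < Rabs K + 1) by (pose proof (Rabs_pos K); lra).
  set (ep := zeta / (6 * (Rabs K + 1))).
  assert (Hep : 0 < ep) by (apply Rdiv_lt_0_compat; lra).
  destruct (short_molecule_in_slice G kap ep (x k) (y k) (proj1 HG) (Hxy k) (Hconn k) Hk Hep)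
    as [u [v [Huv [Hduv Hin]]]].
  exists (molecule M d u v). split.
  - split; [apply molecule_in_ball; exact Huv|exact Hin].
  - apply Rbar_le_lt_trans with (Finite (2 - 4 * zeta)); [simpl; lra|].
    apply (far_from_molecule mu a x y N h); try assumption.
    assert (Hep6 : ep * (6 * (Rabs K + 1)) = zeta) by (unfold ep; field; lra).
    pose proof (Rle_abs K). pose proof (dist_pos u v Huv). fold K. nra.
Qed.

End FreeSpace.

Theorem proposition6p3 (M : Type) (d : M -> M -> R) (x0 : M)
  (hd : is_metric M d) (mu : (M -> R) -> R) :
  S_FM M d x0 mu ->
  (forall eta, 0 < eta ->
     exists (a : nat -> R) (x y : nat -> M),
       (forall k, x k <> y k) /\
       mol_series_norm_conv M d x0 mu a x y /\
       (exists s, is_series (fun k => Rabs (a k)) s /\ s < 1 + eta) /\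
       (forall k, disc_connectable M d (x k) (y k))) ->
  Delta_point M d x0 mu.
Proof.
  intros Hmu Hrep. split; [exact Hmu|].
  intros G alpha HG _ [_ Hmu_slice].
  apply Lub_Rbar_approx.
  - intros t [w [[Hw _] Ht]].
    pose proof (dnorm_diff_le_2 M d x0 mu w (proj2 Hmu) (proj2 Hw)) as Hle2.
    rewrite <- Ht in Hle2. exact Hle2.
  - intros eps Heps.
    destruct (slice_contains_far_molecule M d x0 hd mu G alpha eps Hmu Hrep HG Hmu_slice Heps)
      as [w [Hw Hfar]].
    pose proof (dnorm_diff_le_2 M d x0 mu w (proj2 Hmu) (proj2 (proj1 Hw))) as Hle2.
    destruct (dnorm M d x0 (fsub M mu w)) as [t| |] eqn:Ht; simpl in Hle2, Hfar;
      try contradiction.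
    exists t. split; [exists w; split; [exact Hw|rewrite Ht; reflexivity]|exact Hfar].
Qed.
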